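(* Let $M$ be a mode for a program $P_1$, and assume that $P_1$ is safe w.r.t. $M$ and $P_1$ satisfies $M$. Let $C_1: H\leftarrow G_1,G_2,t_1\neq t_2,G_3$ be a clause in $P_1$, and let $P_2$ be the program derived from $P_1$ by replacing $C_1$ by the clause $C_2: H\leftarrow G_1,t_1\neq t_2,G_2,G_3$. Then (i) $P_2$ is safe w.r.t. $M$, (ii) $P_2$ satisfies $M$, and (iii) for each non-basic atom $A$ which satisfies $M$, $A$ succeeds in $P_1$ iff $A$ succeeds in $P_2$.
   Context: Syntax. Predicate symbols $\mathit{true}$, $=$, $\neq$ are basic, all others non-basic; function symbols form an infinite set. Basic atoms: $\mathit{true}$, $t_1=t_2$, $t_1\neq t_2$ (disequation); non-basic atoms: $p(t_1,\dots,t_m)$ with $p$ non-basic. A goal is a conjunction of atoms ('','' associative, neutral element $\mathit{true}$). A clause $C$ is $A\leftarrow G$ with non-basic head $hd(C)=A$ and body $bd(C)=G$; a program is a set of clauses. All mgu's are relevant and idempotent. A variable $X$ is a local variable of goal $G$ in clause $H\leftarrow G_1,G,G_2$ iff $X\in vars(G)-vars(H,G_1,G_2)$. Operational semantics (for program $P$): (1) $(t_1=t_2,G)\longmapsto_P G\vartheta$ if $t_1,t_2$ unify with mgu $\vartheta$; (2) $(t_1\neq t_2,G)\longmapsto_P G$ if $t_1,t_2$ are not unifiable; (3) $(A,G)\longmapsto_P(bd(C),G)\vartheta$ if $A$ is non-basic, $C$ is a renamed apart (fresh variables) clause of $P$ and $\vartheta$ is an mgu of $A$ and $hd(C)$. A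 goal $G_0$ succeeds in $P$ iff $G_0\longmapsto_P\cdots\longmapsto_P\mathit{true}$. $\longmapsto^*_P$ is the reflexive-transitive closure. Modes. A mode for a non-basic predicate $p$ of arity $h$ is $p(m_1,\dots,m_h)$, $m_i\in\{+,?\}$; argument $t_i$ of $p(t_1,\dots,t_h)$ is an input argument iff $m_i=+$, and variables in input arguments are input variables of the atom. A mode for a program is a set containing exactly one mode for each non-basic predicate occurring in it. An atom satisfies $M$ iff $M$ has a mode for its predicate and its input arguments are ground. A program $P$ satisfies $M$ iff for every non-basic atom $A_0$ satisfying $M$ and every non-basic atom $A$ and goal $G$ with $A_0\longmapsto^*_P(A,G)$, $A$ satisfies $M$. A clause $C$ is safe w.r.t. $M$ iff every variable of every disequation $t_1\neq t_2$ in $bd(C)$ is an input variable of $hd(C)$ or a local variable of $t_1\neq t_2$ in $C$; a program is safe iff all its clauses are. *)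

From Stdlib Require Import List.
Import ListNotations.

Inductive term : Type :=
| Var : nat -> term
| Fn  : nat -> list term -> term.

(** The basic atom [true] is the neutral element of ",", so it is
    represented by the empty goal [[]] rather than by an atom constructor.
    [APred p ts] is the non-basic atom p(ts); a predicate symbol is
    identified by its name together with its arity. *)
Inductive atom : Type :=
| AEq   : term -> term -> atom
| ANeq  : term -> term -> atom
| APred : nat -> list term -> atom.

Definition goal := list atom.

Record clause := mkClause { cpred : nat; cargs : list term; cbody : goal }.

Definition program := clause -> Prop.

Fixpoint tvars (t : term) : list nat :=
  match t with
  | Var x => [x]
  | Fn _ ts => flat_map tvars ts
  end.

Definition tsvars (ts : list term) : list nat := flat_map tvars ts.

Definition avars (a : atom) : list nat :=
  match a with
  | AEq t1 t2 => tvars t1 ++ tvars t2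
  | ANeq t1 t2 => tvars t1 ++ tvars t2
  | APred _ ts => tsvars ts
  end.

Definition gvars (g : goal) : list nat := flat_map avars g.

Definition clause_vars (C : clause) : list nat := tsvars (cargs C) ++ gvars (cbody C).

Definition subst := nat -> term.

Fixpoint tsubst (s : subst) (t : term) : term :=
  match t with
  | Var x => s x
  | Fn f ts => Fn f (map (tsubst s) ts)
  end.

Definition asubst (s : subst) (a : atom) : atom :=
  match a with
  | AEq t1 t2 => AEq (tsubst s t1) (tsubst s t2)
  | ANeq t1 t2 => ANeq (tsubst s t1) (tsubst s t2)
  | APred p ts => APred p (map (tsubst s) ts)
  end.

Definition gsubst (s : subst) (g : goal) : goal := map (asubst s) g.

Definition unifier (s : subst) (ts us : list term) : Prop :=
  map (tsubst s) ts = map (tsubst s) us.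

Definition unifiable (ts us : list term) : Prop := exists s, unifier s ts us.

Definition relevant_idempotent_mgu (th : subst) (ts us : list term) : Prop :=
  unifier th ts us /\
  (forall s, unifier s ts us -> exists d, forall x, s x = tsubst d (th x)) /\
  (forall x, tsubst th (th x) = th x) /\
  (forall x, th x <> Var x ->
     In x (tsvars ts ++ tsvars us) /\
     forall y, In y (tvars (th x)) -> In y (tsvars ts ++ tsvars us)).

Definition renaming := nat -> nat.
Definition injective_ren (r : renaming) : Prop := forall x y, r x = r y -> x = y.
Definition ren_subst (r : renaming) : subst := fun x => Var (r x).
Definition rename_clause (r : renaming) (C : clause) : clause :=
  mkClause (cpred C) (map (tsubst (ren_subst r)) (cargs C))
           (gsubst (ren_subst r) (cbody C)).

(** One step of the operational semantics for program [P]
    (leftmost atom selected). *)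
Inductive step (P : program) : goal -> goal -> Prop :=
| step_eq : forall t1 t2 G th,
    relevant_idempotent_mgu th [t1] [t2] ->
    step P (AEq t1 t2 :: G) (gsubst th G)
| step_neq : forall t1 t2 G,
    ~ unifiable [t1] [t2] ->
    step P (ANeq t1 t2 :: G) G
| step_res : forall p ts G C r th,
    P C -> injective_ren r ->
    (forall x, In x (clause_vars (rename_clause r C)) ->
               ~ In x (gvars (APred p ts :: G))) ->
    cpred C = p ->
    relevant_idempotent_mgu th ts (cargs (rename_clause r C)) ->
    step P (APred p ts :: G) (gsubst th (cbody (rename_clause r C) ++ G)).

Inductive steps (P : program) : goal -> goal -> Prop :=
| steps_refl : forall G, steps P G G
| steps_trans : forall G1 G2 G3, step P G1 G2 -> steps P G2 G3 -> steps P G1 G3.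

Definition succeeds (P : program) (G : goal) : Prop := steps P G [].

(** Modes: a (partial) assignment to each predicate symbol (name, arity)
    of a list of flags, [true] meaning "+" (input) and [false] meaning "?". *)
Definition mode := (nat * nat) -> option (list bool).

Definition occurs (q : nat * nat) (P : program) : Prop :=
  exists C, P C /\
    ((cpred C, length (cargs C)) = q \/
     exists p ts, In (APred p ts) (cbody C) /\ (p, length ts) = q).

Definition is_mode_for (M : mode) (P : program) : Prop :=
  forall q, match M q with
            | Some ms => length ms = snd q /\ occurs q P
            | None => ~ occurs q P
            end.

Definition ground (t : term) : Prop := tvars t = [].

Definition atom_sat (M : mode) (p : nat) (ts : list term) : Prop :=
  exists ms, M (p, length ts) = Some ms /\
    forall i t, nth_error ms i = Some true -> nth_error ts i = Some t -> ground t.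

Definition input_var (M : mode) (p : nat) (ts : list term) (x : nat) : Prop :=
  exists ms i t, M (p, length ts) = Some ms /\ nth_error ms i = Some true /\
    nth_error ts i = Some t /\ In x (tvars t).

Definition prog_satisfies (P : program) (M : mode) : Prop :=
  forall p0 ts0, atom_sat M p0 ts0 ->
  forall p ts G, steps P [APred p0 ts0] (APred p ts :: G) -> atom_sat M p ts.

Definition clause_safe (M : mode) (C : clause) : Prop :=
  forall G1 t1 t2 G2, cbody C = G1 ++ ANeq t1 t2 :: G2 ->
  forall x, In x (tvars t1 ++ tvars t2) ->
    input_var M (cpred C) (cargs C) x \/
    ~ In x (tsvars (cargs C) ++ gvars G1 ++ gvars G2).

Definition prog_safe (M : mode) (P : program) : Prop :=
  forall C, P C -> clause_safe M C.

Definition replace_clause (P : program) (C1 C2 : clause) : program :=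
  fun C => (P C /\ C <> C1) \/ C = C2.

(* Once the head of C1 has been unified with a well-moded call, the disequation
   t1 <> t2 shares no variable with G2: by safety each of its variables is either
   an input variable of the head, which is then ground, or local to the
   disequation, hence fresh.  Leftmost selection never instantiates a variable
   occurring only to the right of the atoms selected so far, so the disequation is
   evaluated on the same instance whether it runs before or after G2, and a
   non-unifiable disequation stays non-unifiable under every substitution.

   Both directions of (iii) are simulations between derivations of P1 and P2 that
   record which disequations one of them has already run and the other still has
   to run.  From P2 to P1, the resolution steps with C1 rename the local variables
   of the disequation above every variable used by the derivation of P2, since P1
   keeps them alive longer.  (ii) follows from the same simulation, and (i) because
   safety only depends on the body of a clause up to permutation. *)

From Stdlib Require Import List Arith Lia Permutation Classical.
Import ListNotations.

Ltac in_app := intros ?x; rewrite ?in_app_iff; tauto.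

Fixpoint term_nested_ind (P : term -> Prop) (HV : forall x, P (Var x))
  (HF : forall f ts, Forall P ts -> P (Fn f ts)) (t : term) : P t :=
  match t with
  | Var x => HV x
  | Fn f ts => HF f ts ((fix go (l : list term) : Forall P l :=
                 match l with
                 | [] => Forall_nil _
                 | t' :: l' => Forall_cons _ (term_nested_ind P HV HF t') (go l')
                 end) ts)
  end.

Lemma tsubst_ext s1 s2 t : (forall x, In x (tvars t) -> s1 x = s2 x) ->
  tsubst s1 t = tsubst s2 t.
Proof.
  induction t as [x|f ts IH] using term_nested_ind; simpl; intros Hs.
  - auto.
  - f_equal. apply map_ext_in. intros a Ha. rewrite Forall_forall in IH.
    apply IH; auto. intros x Hx. apply Hs, in_flat_map. eauto.
Qed.

Lemma in_tvars_tsubst s t y :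
  In y (tvars (tsubst s t)) <-> exists x, In x (tvars t) /\ In y (tvars (s x)).
Proof.
  revert y. induction t as [x|f ts IH] using term_nested_ind; simpl; intros y.
  - split; [eauto | intros [z [[<-|[]] Hz]]; auto].
  - rewrite flat_map_concat_map, map_map, <- flat_map_concat_map, in_flat_map.
    rewrite Forall_forall in IH. split.
    + intros [a [Ha Hy]]. apply IH in Hy as [x [Hx1 Hx2]]; auto.
      exists x. rewrite in_flat_map. eauto.
    + intros [x [Hx1 Hx2]]. apply in_flat_map in Hx1 as [a [Ha Hxa]].
      exists a. rewrite IH; eauto.
Qed.

Lemma tsubst_comp s1 s2 t :
  tsubst s2 (tsubst s1 t) = tsubst (fun x => tsubst s2 (s1 x)) t.
Proof.
  induction t as [x|f ts IH] using term_nested_ind; simpl; auto.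
  f_equal. rewrite map_map. apply map_ext_in. rewrite Forall_forall in IH. auto.
Qed.

Lemma tsubst_var t : tsubst Var t = t.
Proof.
  induction t as [x|f ts IH] using term_nested_ind; simpl; auto.
  f_equal. rewrite <- (map_id ts) at 2. apply map_ext_in. rewrite Forall_forall in IH. auto.
Qed.

Lemma tsubst_id s t : (forall x, In x (tvars t) -> s x = Var x) -> tsubst s t = t.
Proof. intros Hs. rewrite (tsubst_ext s Var t Hs). apply tsubst_var. Qed.

Lemma tsubst_ground s t : ground t -> tsubst s t = t.
Proof. intros Ht. apply tsubst_id. unfold ground in Ht. rewrite Ht. intros x []. Qed.

Lemma in_tsvars_map s ts y :
  In y (tsvars (map (tsubst s) ts)) <-> exists x, In x (tsvars ts) /\ In y (tvars (s x)).
Proof.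
  unfold tsvars. rewrite flat_map_concat_map, map_map, <- flat_map_concat_map, in_flat_map.
  split.
  - intros [a [Ha Hy]]. apply in_tvars_tsubst in Hy as [x [Hx1 Hx2]].
    exists x. rewrite in_flat_map. eauto.
  - intros [x [Hx1 Hx2]]. apply in_flat_map in Hx1 as [a [Ha Hxa]].
    exists a. rewrite in_tvars_tsubst. eauto.
Qed.

Lemma in_avars_asubst s a y :
  In y (avars (asubst s a)) <-> exists x, In x (avars a) /\ In y (tvars (s x)).
Proof.
  destruct a as [u v|u v|q ts]; simpl; try apply in_tsvars_map;
    rewrite !in_app_iff, !in_tvars_tsubst; split.
  all: try (intros [[x Hx]|[x Hx]]; exists x; rewrite in_app_iff; tauto).
  all: intros [x [Hx Hy]]; rewrite in_app_iff in Hx; destruct Hx; eauto.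
Qed.

Lemma gvars_app G G' : gvars (G ++ G') = gvars G ++ gvars G'.
Proof. apply flat_map_app. Qed.

Lemma gvars_cons a G : gvars (a :: G) = avars a ++ gvars G.
Proof. reflexivity. Qed.

Lemma in_gvars x G : In x (gvars G) <-> exists a, In a G /\ In x (avars a).
Proof. apply in_flat_map. Qed.

Lemma in_gvars_gsubst s G y :
  In y (gvars (gsubst s G)) <-> exists x, In x (gvars G) /\ In y (tvars (s x)).
Proof.
  unfold gsubst. rewrite in_gvars. split.
  - intros [b [Hb Hy]]. apply in_map_iff in Hb as [a [<- Ha]].
    apply in_avars_asubst in Hy as [x [Hx1 Hx2]]. exists x. rewrite in_gvars. eauto.
  - intros [x [Hx1 Hx2]]. apply in_gvars in Hx1 as [a [Ha Hxa]].
    exists (asubst s a). rewrite in_map_iff, in_avars_asubst. split; eauto.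
Qed.

Lemma map_tsubst_ext s1 s2 ts : (forall x, In x (tsvars ts) -> s1 x = s2 x) ->
  map (tsubst s1) ts = map (tsubst s2) ts.
Proof.
  intros Hs. apply map_ext_in. intros t Ht. apply tsubst_ext.
  intros x Hx. apply Hs, in_flat_map. eauto.
Qed.

Lemma asubst_ext s1 s2 a : (forall x, In x (avars a) -> s1 x = s2 x) ->
  asubst s1 a = asubst s2 a.
Proof.
  destruct a as [u v|u v|q ts]; simpl; intros Hs;
    [f_equal; apply tsubst_ext; intros; apply Hs, in_app_iff; auto ..|].
  f_equal. apply map_tsubst_ext, Hs.
Qed.

Lemma gsubst_ext s1 s2 G : (forall x, In x (gvars G) -> s1 x = s2 x) ->
  gsubst s1 G = gsubst s2 G.
Proof.
  intros Hs. apply map_ext_in. intros a Ha. apply asubst_ext.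
  intros x Hx. apply Hs, in_gvars. eauto.
Qed.

Lemma asubst_id s a : (forall x, In x (avars a) -> s x = Var x) -> asubst s a = a.
Proof.
  intros Hs. rewrite (asubst_ext s Var a Hs).
  destruct a as [u v|u v|q ts]; simpl; rewrite ?tsubst_var; auto.
  f_equal. rewrite <- (map_id ts) at 2. apply map_ext, tsubst_var.
Qed.

Lemma asubst_comp s1 s2 a :
  asubst s2 (asubst s1 a) = asubst (fun x => tsubst s2 (s1 x)) a.
Proof.
  destruct a as [u v|u v|q ts]; simpl; rewrite ?tsubst_comp; auto.
  f_equal. rewrite map_map. apply map_ext. intros. apply tsubst_comp.
Qed.

Lemma gsubst_comp s1 s2 G :
  gsubst s2 (gsubst s1 G) = gsubst (fun x => tsubst s2 (s1 x)) G.
Proof. unfold gsubst. rewrite map_map. apply map_ext. intros. apply asubst_comp. Qed.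

Lemma gsubst_app s G G' : gsubst s (G ++ G') = gsubst s G ++ gsubst s G'.
Proof. apply map_app. Qed.

Definition disjoint (l1 l2 : list nat) : Prop := forall x, In x l1 -> In x l2 -> False.

Definition supported (th : subst) (U : list nat) : Prop :=
  forall x, th x <> Var x -> In x U /\ incl (tvars (th x)) U.

Lemma mgu_supported th ts us :
  relevant_idempotent_mgu th ts us -> supported th (tsvars ts ++ tsvars us).
Proof. intros (_ & _ & _ & Hrel) x Hx. destruct (Hrel x Hx). split; auto. Qed.

Lemma tsvars_single t : tsvars [t] = tvars t.
Proof. apply app_nil_r. Qed.

Section Supported.
Variables (th : subst) (U : list nat).
Hypothesis Hth : supported th U.

Lemma supported_tvars x y : In y (tvars (th x)) -> y = x \/ In y U.
Proof.
  intros Hy. destruct (classic (th x = Var x)) as [E|E].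
  - rewrite E in Hy. destruct Hy as [<-|[]]. auto.
  - right. apply (Hth x E), Hy.
Qed.

Lemma supported_fix x : ~ In x U -> th x = Var x.
Proof.
  intros Hx. destruct (classic (th x = Var x)) as [E|E]; auto.
  exfalso. exact (Hx (proj1 (Hth x E))).
Qed.

Lemma in_avars_asubst_supported a y :
  In y (avars (asubst th a)) -> In y (avars a) \/ In y U.
Proof.
  intros Hy. apply in_avars_asubst in Hy as [x [Hx Hy]].
  destruct (supported_tvars x y Hy) as [->|]; auto.
Qed.

Lemma in_gvars_gsubst_supported G y :
  In y (gvars (gsubst th G)) -> In y (gvars G) \/ In y U.
Proof.
  intros Hy. apply in_gvars_gsubst in Hy as [x [Hx Hy]].
  destruct (supported_tvars x y Hy) as [->|]; auto.
Qed.

Lemma asubst_supported_id a : disjoint (avars a) U -> asubst th a = a.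
Proof.
  intros Ha. apply asubst_id. intros x Hx. apply supported_fix. intro. eapply Ha; eauto.
Qed.

Lemma gsubst_untouched K D L : disjoint (avars D) U -> disjoint (avars D) (gvars K) ->
  gsubst th (K ++ D :: L) = gsubst th K ++ D :: gsubst th L /\
  disjoint (avars D) (gvars (gsubst th K)).
Proof.
  intros HU HK. split.
  - rewrite gsubst_app. simpl. rewrite asubst_supported_id; auto.
  - intros x Hx Hx'. destruct (in_gvars_gsubst_supported K x Hx'); eauto.
Qed.

End Supported.

Lemma steps_app P G G' G'' : steps P G G' -> steps P G' G'' -> steps P G G''.
Proof. induction 1; intros; auto. econstructor; eauto. Qed.

Lemma step_steps P G G' : step P G G' -> steps P G G'.
Proof. intros. econstructor; eauto. constructor. Qed.

Lemma steps_step P G G' G'' : steps P G G' -> step P G' G'' -> steps P G G''.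
Proof. intros. eapply steps_app; eauto using step_steps. Qed.

Lemma not_unifiable_tsubst s u v :
  ~ unifiable [u] [v] -> ~ unifiable [tsubst s u] [tsubst s v].
Proof.
  intros Hn [s' Hs]. apply Hn. exists (fun x => tsubst s' (s x)).
  unfold unifier in *. simpl in *. rewrite <- !tsubst_comp. congruence.
Qed.

Lemma in_clause_vars_rename r C y :
  In y (clause_vars (rename_clause r C)) <-> exists x, In x (clause_vars C) /\ y = r x.
Proof.
  unfold clause_vars, rename_clause; simpl. rewrite in_app_iff, in_tsvars_map, in_gvars_gsubst.
  split.
  - intros [[x [Hx [<-|[]]]]|[x [Hx [<-|[]]]]]; exists x; rewrite in_app_iff; auto.
  - intros [x [Hx ->]]. rewrite in_app_iff in Hx. simpl.
    destruct Hx; [left|right]; exists x; auto.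
Qed.

Lemma step_untouched_atom P K D L G' :
  step P (K ++ D :: L) G' -> K <> [] -> disjoint (avars D) (gvars K) ->
  exists K' L', G' = K' ++ D :: L' /\ disjoint (avars D) (gvars K').
Proof.
  intros Hst HK HD. destruct K as [|a K]; [congruence|]. clear HK.
  assert (HDK : disjoint (avars D) (gvars K)).
  { intros x Hx Hx'. apply (HD x Hx). simpl. rewrite in_app_iff. auto. }
  inversion Hst as [t1 t2 G th Hmgu|t1 t2 G Hnu|q ts G C r th HC Hr Hfr Hq Hmgu]; subst.
  - assert (Hth := mgu_supported _ _ _ Hmgu). rewrite !tsvars_single in Hth.
    edestruct (gsubst_untouched th) as [-> HK']; eauto.
    intros x Hx Hx'. apply (HD x Hx). simpl. rewrite !in_app_iff in *. tauto.
  - eauto.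
  - assert (Hth := mgu_supported _ _ _ Hmgu).
    assert (Hfresh : disjoint (avars D) (clause_vars (rename_clause r C))).
    { intros x Hx Hx'. apply (Hfr x Hx'), in_gvars. exists D.
      simpl. rewrite in_app_iff. simpl. auto. }
    rewrite app_assoc. edestruct (gsubst_untouched th) as [-> HK']; eauto.
    + intros x Hx Hx'. rewrite in_app_iff in Hx'. destruct Hx'.
      * apply (HD x Hx). simpl. rewrite in_app_iff. auto.
      * apply (Hfresh x Hx). unfold clause_vars. rewrite in_app_iff. auto.
    + intros x Hx Hx'. rewrite gvars_app, in_app_iff in Hx'. destruct Hx'; [|eauto].
      apply (Hfresh x Hx). unfold clause_vars. rewrite in_app_iff. auto.
Qed.

Lemma succeeds_neq_not_unifiable P K u v L :
  succeeds P (K ++ ANeq u v :: L) -> disjoint (tvars u ++ tvars v) (gvars K) ->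
  ~ unifiable [u] [v].
Proof.
  unfold succeeds. intros Hs. remember (K ++ ANeq u v :: L) as G eqn:EG. remember [] as E.
  revert K L EG. induction Hs as [G|G G' G'' Hst Hs IH]; intros K L EG HK; subst.
  - destruct K; discriminate.
  - destruct K as [|a K].
    + inversion Hst; auto.
    + destruct (step_untouched_atom _ _ _ _ _ Hst) as (K' & L' & -> & HK'); eauto; discriminate.
Qed.

Definition below (B : nat) (l : list nat) : Prop := forall x, In x l -> x < B.

Lemma below_exists l : exists B, below B l.
Proof.
  induction l as [|a l [B HB]]; [exists 0; intros x []|].
  exists (S (max a B)). intros x [<-|Hx]; [|apply HB in Hx]; lia.
Qed.

Lemma below_le B B' l : below B l -> B <= B' -> below B' l.
Proof. intros Hl Hle x Hx. apply Hl in Hx. lia. Qed.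

Inductive bstep (P : program) (B : nat) : goal -> goal -> Prop :=
| bstep_eq t1 t2 G th :
    below B (gvars (AEq t1 t2 :: G)) ->
    relevant_idempotent_mgu th [t1] [t2] ->
    bstep P B (AEq t1 t2 :: G) (gsubst th G)
| bstep_neq t1 t2 G :
    below B (gvars (ANeq t1 t2 :: G)) ->
    ~ unifiable [t1] [t2] ->
    bstep P B (ANeq t1 t2 :: G) G
| bstep_res p ts G C r th :
    below B (gvars (APred p ts :: G)) ->
    below B (clause_vars (rename_clause r C)) ->
    P C -> injective_ren r ->
    (forall x, In x (clause_vars (rename_clause r C)) ->
               ~ In x (gvars (APred p ts :: G))) ->
    cpred C = p ->
    relevant_idempotent_mgu th ts (cargs (rename_clause r C)) ->
    bstep P B (APred p ts :: G) (gsubst th (cbody (rename_clause r C) ++ G)).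

Inductive bsteps (P : program) (B : nat) : goal -> goal -> Prop :=
| bsteps_refl G : bsteps P B G G
| bsteps_trans G G' G'' : bstep P B G G' -> bsteps P B G' G'' -> bsteps P B G G''.

Lemma bstep_le P B B' G G' : bstep P B G G' -> B <= B' -> bstep P B' G G'.
Proof.
  intros Hst Hle. destruct Hst; [constructor 1|constructor 2|econstructor 3];
    eauto using below_le.
Qed.

Lemma bsteps_le P B B' G G' : bsteps P B G G' -> B <= B' -> bsteps P B' G G'.
Proof. intros Hs Hle. induction Hs; econstructor; eauto using bstep_le. Qed.

Lemma step_bstep P G G' : step P G G' -> exists B, bstep P B G G'.
Proof.
  destruct 1 as [t1 t2 G th|t1 t2 G|p ts G C r th].
  - destruct (below_exists (gvars (AEq t1 t2 :: G))) as [B HB]. exists B. constructor; auto.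
  - destruct (below_exists (gvars (ANeq t1 t2 :: G))) as [B HB]. exists B. constructor; auto.
  - destruct (below_exists (gvars (APred p ts :: G) ++ clause_vars (rename_clause r C)))
      as [B HB].
    exists B. econstructor; eauto; intros x Hx; apply HB, in_app_iff; auto.
Qed.

Lemma steps_bsteps P G G' : steps P G G' -> exists B, bsteps P B G G'.
Proof.
  induction 1 as [G|G G' G'' Hst Hs [B HB]]; [exists 0; constructor|].
  destruct (step_bstep _ _ _ Hst) as [B' HB'].
  exists (max B B'). econstructor; [eapply bstep_le|eapply bsteps_le]; eauto; lia.
Qed.

Lemma mgu_grounds_input M p ts hargs r th x :
  atom_sat M p ts -> unifier th ts (map (tsubst (ren_subst r)) hargs) ->
  input_var M p hargs x -> ground (th (r x)).
Proof.
  intros [ms [HM Hgr]] Hu (ms' & i & t & HM' & Hi & Ht & Hx).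
  assert (Hlen : length ts = length hargs).
  { apply (f_equal (@length _)) in Hu. rewrite !length_map in Hu. auto. }
  rewrite <- Hlen, HM in HM'. injection HM' as <-.
  destruct (nth_error ts i) as [t'|] eqn:Et;
    [|apply nth_error_None in Et; rewrite Hlen in Et; apply nth_error_None in Et; congruence].
  assert (Ht' : ground t') by exact (Hgr i t' Hi Et).
  assert (E : t' = tsubst th (tsubst (ren_subst r) t)).
  { apply (f_equal (fun l => nth_error l i)) in Hu.
    rewrite !nth_error_map, Et, Ht in Hu. injection Hu as Hu.
    rewrite <- Hu. symmetry. apply tsubst_ground, Ht'. }
  unfold ground in *. destruct (tvars (th (r x))) as [|y l] eqn:Ey; auto.
  assert (Hy : In y (tvars t')).
  { rewrite E, tsubst_comp, in_tvars_tsubst. exists x. simpl. rewrite Ey. simpl. auto. }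
  rewrite Ht' in Hy. destruct Hy.
Qed.

Section Lag.
Variable pending : atom -> Prop.
Variable moved : atom -> atom -> Prop.

(* [lag V G H]: the goal [G] of the transformed program and the goal [H] of the
   original one agree, except that [H] still contains [pending] disequations
   that [G] has already run, and that a [moved] disequation [D] which [G] runs
   before a block [K] appears in [H], as [D'], only after [K].  [V] collects the
   variables of the atoms to the left. *)
Inductive lag : list nat -> goal -> goal -> Prop :=
| lag_nil V : lag V [] []
| lag_cons V a G H : lag (V ++ avars a) G H -> lag V (a :: G) (a :: H)
| lag_pending V d G H : pending d -> lag (V ++ avars d) G H -> lag V G (d :: H)
| lag_moved V D D' K G H : moved D D' -> disjoint (avars D) (V ++ gvars K) ->
    lag (V ++ gvars K ++ avars D ++ avars D') G H -> lag V (D :: K ++ G) (K ++ D' :: H).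

Lemma lag_weaken V G H : lag V G H -> forall V', incl V' V -> lag V' G H.
Proof.
  induction 1 as [V|V a G H _ IH|V d G H Hd _ IH|V D D' K G H HD Hdis _ IH];
    intros V' HV; constructor; auto.
  - apply IH. intros x. rewrite !in_app_iff. specialize (HV x). tauto.
  - apply IH. intros x. rewrite !in_app_iff. specialize (HV x). tauto.
  - intros x Hx Hx'. apply (Hdis x Hx). rewrite in_app_iff in *. specialize (HV x). tauto.
  - apply IH. intros x. rewrite !in_app_iff. specialize (HV x). tauto.
Qed.

Lemma lag_extend V G H X : lag V G H -> disjoint X (gvars G) -> lag (V ++ X) G H.
Proof.
  intros HL. revert X.
  induction HL as [V|V a G H _ IH|V d G H Hd _ IH|V D D' K G H HD Hdis _ IH];
    intros X HX; constructor; auto.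
  - apply lag_weaken with ((V ++ avars a) ++ X); [|in_app].
    apply IH. intros x Hx Hx'. apply (HX x Hx). simpl. rewrite in_app_iff. auto.
  - apply lag_weaken with ((V ++ avars d) ++ X); [|in_app]. auto.
  - intros x Hx Hx'. rewrite !in_app_iff in Hx'. destruct Hx' as [[Hx'|Hx']|Hx'].
    + apply (Hdis x Hx). rewrite in_app_iff. auto.
    + apply (HX x Hx'). simpl. rewrite in_app_iff. auto.
    + apply (Hdis x Hx). rewrite in_app_iff. auto.
  - apply lag_weaken with ((V ++ gvars K ++ avars D ++ avars D') ++ X); [|in_app].
    apply IH. intros x Hx Hx'. apply (HX x Hx). simpl. rewrite gvars_app, !in_app_iff. auto.
Qed.

Lemma lag_app K V G H : lag (V ++ gvars K) G H -> lag V (K ++ G) (K ++ H).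
Proof.
  revert V. induction K as [|a K IH]; intros V HL; simpl.
  - eapply lag_weaken; [exact HL|in_app].
  - constructor. apply IH. rewrite <- app_assoc. exact HL.
Qed.

Lemma lag_nil_inv V G : lag V G [] -> G = [].
Proof.
  remember [] as H eqn:E. destruct 1; try discriminate; auto. destruct K; discriminate.
Qed.

Lemma lag_gvars_incl :
  (forall D D', moved D D' -> incl (avars D) (avars D')) ->
  forall V G H, lag V G H -> incl (gvars G) (gvars H).
Proof.
  intros Hmv. induction 1 as [V|V a G H _ IH|V d G H Hd _ IH|V D D' K G H HD Hdis _ IH];
    intros x Hx; simpl in *; rewrite ?gvars_app, ?in_app_iff in *; simpl in *;
    rewrite ?in_app_iff in *.
  - exact Hx.
  - destruct Hx; auto.
  - auto.
  - apply Hmv in HD. destruct Hx as [Hx|[Hx|Hx]]; auto.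
Qed.

Lemma lag_gvars_above B :
  (forall d, pending d -> forall x, In x (avars d) -> B <= x) ->
  (forall D D', moved D D' -> forall x, In x (avars D') -> B <= x) ->
  forall V G H, lag V G H -> forall x, In x (gvars H) -> In x (gvars G) \/ B <= x.
Proof.
  intros Hpd Hmv. induction 1 as [V|V a G H _ IH|V d G H Hd _ IH|V D D' K G H HD Hdis _ IH];
    intros x Hx; simpl in *; rewrite ?gvars_app, ?in_app_iff in *; simpl in *;
    rewrite ?in_app_iff in *.
  - auto.
  - destruct Hx as [Hx|Hx]; [|destruct (IH x Hx)]; auto.
  - destruct Hx as [Hx|Hx]; eauto.
  - destruct Hx as [Hx|[Hx|Hx]]; [| |destruct (IH x Hx)]; eauto.
Qed.

Section Subst.
Variables (th : subst) (U : list nat).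
Hypothesis Hth : supported th U.
Hypothesis Hpending : forall d, pending d -> pending (asubst th d).
Hypothesis Hmoved : forall D D', moved D D' -> disjoint (avars D) U ->
  moved (asubst th D) (asubst th D').

Definition clear_of (V vs : list nat) : Prop := forall x, In x U -> In x V \/ ~ In x vs.

Lemma clear_of_mono V V' vs vs' :
  clear_of V vs -> incl V V' -> incl vs' vs -> clear_of V' vs'.
Proof. intros HU HV Hvs x Hx. destruct (HU x Hx); auto. Qed.

Lemma incl_avars_asubst W a : incl (avars a) W -> incl (avars (asubst th a)) (W ++ U).
Proof.
  intros Ha x Hx. apply in_app_iff. destruct (in_avars_asubst_supported _ _ Hth a x Hx); auto.
Qed.

Lemma incl_gvars_gsubst W K : incl (gvars K) W -> incl (gvars (gsubst th K)) (W ++ U).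
Proof.
  intros HK x Hx. apply in_app_iff. destruct (in_gvars_gsubst_supported _ _ Hth K x Hx); auto.
Qed.

Lemma lag_gsubst V G H : lag V G H -> clear_of V (gvars G ++ gvars H) ->
  forall W, incl W (V ++ U) -> lag W (gsubst th G) (gsubst th H).
Proof.
  induction 1 as [V|V a G H _ IH|V d G H Hd _ IH|V D D' K G H HD Hdis _ IH];
    intros HU W HW; simpl.
  - constructor.
  - constructor. apply IH.
    + eapply clear_of_mono; [exact HU|in_app|simpl; in_app].
    + assert (Ha := incl_avars_asubst _ a (incl_refl _)).
      intros x. specialize (HW x). specialize (Ha x). rewrite !in_app_iff in *. tauto.
  - constructor; auto. apply IH.
    + eapply clear_of_mono; [exact HU|in_app|simpl; in_app].
    + assert (Ha := incl_avars_asubst _ d (incl_refl _)).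
      intros x. specialize (HW x). specialize (Ha x). rewrite !in_app_iff in *. tauto.
  - assert (HDU : disjoint (avars D) U).
    { intros x Hx Hx'. destruct (HU x Hx') as [Hv|Hv].
      - apply (Hdis x Hx). apply in_app_iff. auto.
      - apply Hv. simpl. rewrite !in_app_iff. auto. }
    unfold gsubst. simpl. rewrite !map_app. simpl. fold (gsubst th K) (gsubst th G) (gsubst th H).
    assert (HD2 := Hmoved D D' HD HDU). rewrite (asubst_supported_id _ _ Hth D HDU) in *.
    assert (HK := incl_gvars_gsubst _ K (incl_refl _)).
    assert (HD' := incl_avars_asubst _ D' (incl_refl _)).
    constructor; auto.
    + intros x Hx Hx'. apply in_app_iff in Hx'. destruct Hx' as [Hx'|Hx'];
        [apply HW in Hx'|apply HK in Hx']; apply in_app_iff in Hx';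
        (destruct Hx' as [Hx'|Hx']; [apply (Hdis x Hx), in_app_iff; auto|exact (HDU x Hx Hx')]).
    + apply IH.
      * eapply clear_of_mono; [exact HU|in_app|]. simpl. rewrite !gvars_app. simpl. in_app.
      * intros x. specialize (HW x). specialize (HK x). specialize (HD' x).
        rewrite !in_app_iff in *. tauto.
Qed.

Lemma lag_resolve V X K G H :
  lag V G H -> disjoint X (gvars G) -> incl U (V ++ X) -> incl (gvars K) X ->
  lag [] (gsubst th (K ++ G)) (gsubst th (K ++ H)).
Proof.
  intros HL HX HU HK. rewrite !gsubst_app. apply lag_app.
  apply (lag_gsubst (V ++ X)); [apply lag_extend; auto|intros x Hx; left; auto|].
  intros x Hx. apply (incl_gvars_gsubst _ K HK) in Hx. rewrite !in_app_iff in *. tauto.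
Qed.

Lemma lag_resolve_moved V X K1 K2 K3 Da Db G H :
  lag V G H -> disjoint X (gvars G) -> incl U (V ++ X) ->
  incl (gvars K1 ++ gvars K2 ++ gvars K3 ++ avars Da ++ avars Db) X ->
  moved (asubst th Da) (asubst th Db) ->
  disjoint (avars (asubst th Da)) (gvars (gsubst th K1) ++ gvars (gsubst th K2)) ->
  lag [] (gsubst th (K1 ++ Da :: K2 ++ K3 ++ G)) (gsubst th (K1 ++ K2 ++ Db :: K3 ++ H)).
Proof.
  intros HL HX HU HK HDD' HDK. unfold gsubst. rewrite !map_app. simpl. rewrite !map_app.
  fold (gsubst th K1) (gsubst th K2) (gsubst th K3) (gsubst th G) (gsubst th H).
  apply lag_app, lag_moved, lag_app; auto.
  apply (lag_gsubst (V ++ X)); [apply lag_extend; auto|intros x Hx; left; auto|].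
  assert (HKX : forall Y, incl Y (gvars K1 ++ gvars K2 ++ gvars K3 ++ avars Da ++ avars Db) ->
                 incl Y X) by eauto using incl_tran.
  assert (HX1 := incl_gvars_gsubst X K1 (HKX (gvars K1) ltac:(in_app))).
  assert (HX2 := incl_gvars_gsubst X K2 (HKX (gvars K2) ltac:(in_app))).
  assert (HX3 := incl_gvars_gsubst X K3 (HKX (gvars K3) ltac:(in_app))).
  assert (HXa := incl_avars_asubst X Da (HKX (avars Da) ltac:(in_app))).
  assert (HXb := incl_avars_asubst X Db (HKX (avars Db) ltac:(in_app))).
  intros x Hx. specialize (HX1 x). specialize (HX2 x). specialize (HX3 x).
  specialize (HXa x). specialize (HXb x). rewrite !in_app_iff in *. tauto.
Qed.
End Subst.
End Lag.

Section Transformation.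
Variables (M : mode) (P1 : program).
Variables (p : nat) (hargs : list term) (G1 G2 G3 : goal) (t1 t2 : term).

Definition diseq := ANeq t1 t2.
Definition C1 := mkClause p hargs (G1 ++ G2 ++ diseq :: G3).
Definition C2 := mkClause p hargs (G1 ++ diseq :: G2 ++ G3).
Definition P2 := replace_clause P1 C1 C2.
Definition outer_vars := tsvars hargs ++ gvars G1 ++ gvars G2 ++ gvars G3.

Lemma in_clause_vars_C1 x : In x (clause_vars C1) <-> In x outer_vars \/ In x (avars diseq).
Proof.
  unfold clause_vars, outer_vars; simpl. rewrite !gvars_app. simpl. rewrite !in_app_iff. tauto.
Qed.

Lemma in_clause_vars_C2 x : In x (clause_vars C2) <-> In x outer_vars \/ In x (avars diseq).
Proof.
  unfold clause_vars, outer_vars; simpl. rewrite !gvars_app. simpl. rewrite !gvars_app, !in_app_iff.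
  tauto.
Qed.

Lemma clause_vars_rename_C1_C2 r x :
  In x (clause_vars (rename_clause r C1)) <-> In x (clause_vars (rename_clause r C2)).
Proof.
  rewrite !in_clause_vars_rename. split; intros [z [Hz ->]]; exists z; split; auto;
    [apply in_clause_vars_C2, in_clause_vars_C1 | apply in_clause_vars_C1, in_clause_vars_C2];
    auto.
Qed.

Lemma outer_vars_clause_vars r K x : incl (gvars K) outer_vars ->
  In x (gvars (gsubst (ren_subst r) K)) -> In x (clause_vars (rename_clause r C1)).
Proof.
  intros HK Hx. apply in_gvars_gsubst in Hx as [z [Hz [<-|[]]]].
  apply in_clause_vars_rename. exists z. rewrite in_clause_vars_C1. auto.
Qed.

Lemma diseq_clause_vars r x :
  In x (avars (asubst (ren_subst r) diseq)) -> In x (clause_vars (rename_clause r C1)).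
Proof.
  intros Hx. apply in_avars_asubst in Hx as [z [Hz [<-|[]]]].
  apply in_clause_vars_rename. exists z. rewrite in_clause_vars_C1. auto.
Qed.

Lemma outer_G1 : incl (gvars G1) outer_vars.
Proof. unfold outer_vars. in_app. Qed.
Lemma outer_G2 : incl (gvars G2) outer_vars.
Proof. unfold outer_vars. in_app. Qed.
Lemma outer_G3 : incl (gvars G3) outer_vars.
Proof. unfold outer_vars. in_app. Qed.

Lemma body_C1_app r G : cbody (rename_clause r C1) ++ G =
  gsubst (ren_subst r) G1 ++ gsubst (ren_subst r) G2 ++
  asubst (ren_subst r) diseq :: gsubst (ren_subst r) G3 ++ G.
Proof. simpl. rewrite !gsubst_app, <- !app_assoc. reflexivity. Qed.

Lemma body_C2_app r G : cbody (rename_clause r C2) ++ G =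
  gsubst (ren_subst r) G1 ++ asubst (ren_subst r) diseq ::
  gsubst (ren_subst r) G2 ++ gsubst (ren_subst r) G3 ++ G.
Proof.
  simpl. rewrite !gsubst_app, <- !app_assoc. simpl. rewrite gsubst_app, <- app_assoc.
  reflexivity.
Qed.

Definition shift_local (N : nat) (r : renaming) : renaming :=
  fun x => if in_dec Nat.eq_dec x outer_vars then r x else N + r x.

Lemma shift_local_outer N r x : In x outer_vars -> shift_local N r x = r x.
Proof. unfold shift_local. destruct (in_dec Nat.eq_dec x outer_vars); tauto. Qed.

Lemma shift_local_local N r x : ~ In x outer_vars -> shift_local N r x = N + r x.
Proof. unfold shift_local. destruct (in_dec Nat.eq_dec x outer_vars); tauto. Qed.

Lemma shift_local_injective N r : injective_ren r ->
  (forall x, In x outer_vars -> r x < N) -> injective_ren (shift_local N r).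
Proof.
  intros Hr HN x y. unfold shift_local.
  destruct (in_dec Nat.eq_dec x outer_vars) as [Hx|Hx];
    destruct (in_dec Nat.eq_dec y outer_vars) as [Hy|Hy]; intros E.
  - apply Hr. exact E.
  - specialize (HN x Hx). lia.
  - specialize (HN y Hy). lia.
  - apply Hr. lia.
Qed.

Lemma gsubst_shift_local N r K : incl (gvars K) outer_vars ->
  gsubst (ren_subst (shift_local N r)) K = gsubst (ren_subst r) K.
Proof.
  intros HK. apply gsubst_ext. intros x Hx. unfold ren_subst. rewrite shift_local_outer; auto.
Qed.

Lemma head_shift_local N r :
  map (tsubst (ren_subst (shift_local N r))) hargs = map (tsubst (ren_subst r)) hargs.
Proof.
  apply map_tsubst_ext. intros x Hx. unfold ren_subst. rewrite shift_local_outer; auto.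
  unfold outer_vars. apply in_app_iff. auto.
Qed.

Lemma in_clause_vars_shift_local N r y :
  In y (clause_vars (rename_clause (shift_local N r) C1)) ->
  In y (clause_vars (rename_clause r C2)) \/ N <= y.
Proof.
  intros Hy. apply in_clause_vars_rename in Hy as [z [Hz ->]].
  destruct (in_dec Nat.eq_dec z outer_vars) as [Ho|Ho].
  - left. rewrite shift_local_outer by exact Ho. apply in_clause_vars_rename.
    exists z. rewrite in_clause_vars_C2. auto.
  - right. rewrite shift_local_local by exact Ho. lia.
Qed.

Hypothesis Hsafe : prog_safe M P1.
Hypothesis HC1 : P1 (mkClause p hargs (G1 ++ G2 ++ ANeq t1 t2 :: G3)).
Hypothesis Hsat : prog_satisfies P1 M.

Lemma diseq_shared_var_input x :
  In x (avars diseq) -> In x outer_vars -> input_var M p hargs x.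
Proof.
  intros Hd Ho. destruct (Hsafe _ HC1 (G1 ++ G2) t1 t2 G3) with (x := x) as [|Hn]; auto.
  - simpl. rewrite app_assoc. reflexivity.
  - exfalso. apply Hn. unfold outer_vars in Ho. rewrite gvars_app. rewrite !in_app_iff in *. tauto.
Qed.

Section Call.
Variables (r : renaming) (ts : list term) (th : subst).
Hypothesis Hr : injective_ren r.
Hypothesis Hfresh : forall x, In x (clause_vars C1) -> ~ In (r x) (tsvars ts).
Hypothesis Hmgu : relevant_idempotent_mgu th ts (map (tsubst (ren_subst r)) hargs).
Hypothesis Hcall : atom_sat M p ts.

Definition unified_vars := tsvars ts ++ tsvars (map (tsubst (ren_subst r)) hargs).

Lemma local_var_not_unified x :
  In x (avars diseq) -> ~ In x outer_vars -> ~ In (r x) unified_vars.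
Proof.
  intros Hd Ho Hu. apply in_app_iff in Hu as [Hu|Hu].
  - apply (Hfresh x); auto. apply in_clause_vars_C1. auto.
  - apply in_tsvars_map in Hu as [z [Hz [Hzx|[]]]]. apply Hr in Hzx. subst.
    apply Ho. unfold outer_vars. rewrite in_app_iff. auto.
Qed.

Lemma mgu_fixes_local_var x :
  In x (avars diseq) -> ~ In x outer_vars -> th (r x) = Var (r x).
Proof.
  intros. apply (supported_fix _ unified_vars).
  - exact (mgu_supported _ _ _ Hmgu).
  - apply local_var_not_unified; auto.
Qed.

Lemma mgu_grounds_shared_var x :
  In x (avars diseq) -> In x outer_vars -> ground (th (r x)).
Proof.
  intros. eapply mgu_grounds_input; eauto using diseq_shared_var_input. apply Hmgu.
Qed.

Lemma instantiated_diseq_disjoint K : incl (gvars K) outer_vars ->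
  disjoint (avars (asubst th (asubst (ren_subst r) diseq)))
           (gvars (gsubst th (gsubst (ren_subst r) K))).
Proof.
  intros HK y Hy Hy'. rewrite asubst_comp in Hy. apply in_avars_asubst in Hy as [x [Hx Hy]].
  simpl in Hy. destruct (in_dec Nat.eq_dec x outer_vars) as [Ho|Ho].
  - rewrite (mgu_grounds_shared_var x Hx Ho) in Hy. destruct Hy.
  - rewrite (mgu_fixes_local_var x Hx Ho) in Hy. destruct Hy as [<-|[]].
    rewrite gsubst_comp in Hy'. apply in_gvars_gsubst in Hy' as [z [Hz Hxz]].
    destruct (supported_tvars _ _ (mgu_supported _ _ _ Hmgu) _ _ Hxz) as [E|E].
    + apply Hr in E. subst. auto.
    + apply (local_var_not_unified x); auto.
Qed.

Lemma instantiated_diseq_shift_local N : (forall x, In x unified_vars -> x < N) ->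
  asubst th (asubst (ren_subst (shift_local N r)) diseq) =
  asubst (fun y => Var (N + y)) (asubst th (asubst (ren_subst r) diseq)).
Proof.
  intros HN. rewrite !asubst_comp. apply asubst_ext. intros x Hx. unfold ren_subst. simpl.
  destruct (in_dec Nat.eq_dec x outer_vars) as [Ho|Ho].
  - rewrite shift_local_outer, tsubst_ground; auto using mgu_grounds_shared_var.
  - rewrite shift_local_local, mgu_fixes_local_var by assumption. simpl.
    apply (supported_fix _ _ (mgu_supported _ _ _ Hmgu)). intros Hu. apply HN in Hu. lia.
Qed.

End Call.

Section Forward.
Variables (q : nat) (ts0 : list term).
Hypothesis Hq : atom_sat M q ts0.

Definition is_diseq (d : atom) : Prop := exists u v, d = ANeq u v.
Definition same_diseq (D D' : atom) : Prop := D = D' /\ is_diseq D.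

Local Notation fwd_lag := (lag is_diseq same_diseq).

Lemma is_diseq_asubst th d : is_diseq d -> is_diseq (asubst th d).
Proof. intros [u [v ->]]. simpl. red. eauto. Qed.

Lemma same_diseq_asubst th D D' :
  same_diseq D D' -> same_diseq (asubst th D) (asubst th D').
Proof. intros [<- Hd]. split; auto using is_diseq_asubst. Qed.

Lemma fwd_lag_gvars_incl V G H : fwd_lag V G H -> incl (gvars G) (gvars H).
Proof. apply lag_gvars_incl. intros D D' [<- _]. apply incl_refl. Qed.

Lemma fwd_lag_fresh V a G H X : fwd_lag V G H ->
  (forall x, In x X -> ~ In x (gvars (a :: H))) -> forall x, In x X -> ~ In x (gvars (a :: G)).
Proof.
  intros HL Hfr x Hx Hx'. apply (Hfr x Hx). rewrite gvars_cons, in_app_iff in *.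
  destruct Hx'; auto. right. eapply fwd_lag_gvars_incl; eauto.
Qed.

Lemma fwd_front V G h H :
  fwd_lag V G (h :: H) -> succeeds P1 (h :: H) ->
  exists G', steps P2 G G' /\
    ((exists G0, G' = h :: G0 /\ fwd_lag (V ++ avars h) G0 H) \/
     (is_diseq h /\ fwd_lag (V ++ avars h) G' H)).
Proof.
  intros HL Hs. remember (h :: H) as hH eqn:EK.
  destruct HL as [|V a G0 H0 HL0|V d G0 H0 Hd HL0|V D D' K G0 H0 HD Hdis HL0];
    [discriminate|injection EK as -> -> ..|].
  - exists (h :: G0). split; [constructor|]. left. eauto.
  - exists G0. split; [constructor|]. right. auto.
  - destruct HD as [<- [u [v ->]]].
    assert (Hn : ~ unifiable [u] [v]).
    { apply (succeeds_neq_not_unifiable P1 K u v H0 Hs).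
      intros x Hx Hx'. apply (Hdis x Hx), in_app_iff. auto. }
    exists (K ++ G0). split; [apply step_steps; constructor; auto|].
    destruct K as [|a K]; simpl in EK; injection EK as <- <-.
    + right. split; [red; eauto|]. eapply lag_weaken; [exact HL0|in_app].
    + left. exists (K ++ G0). split; auto. apply lag_app, lag_pending; [red; eauto|].
      eapply lag_weaken; [exact HL0|]. simpl. in_app.
Qed.

Lemma fwd_resolve_other ts G H C r th :
  fwd_lag (tsvars ts) G H -> P1 C -> C <> C1 -> injective_ren r ->
  (forall x, In x (clause_vars (rename_clause r C)) -> ~ In x (gvars (APred (cpred C) ts :: H))) ->
  relevant_idempotent_mgu th ts (cargs (rename_clause r C)) ->
  exists G', step P2 (APred (cpred C) ts :: G) G' /\
             fwd_lag [] G' (gsubst th (cbody (rename_clause r C) ++ H)).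
Proof.
  intros HL HC HC1' Hr Hfr Hmgu. exists (gsubst th (cbody (rename_clause r C) ++ G)). split.
  - apply step_res; auto.
    + left. auto.
    + exact (fwd_lag_fresh _ _ _ _ _ HL Hfr).
  - apply (lag_resolve _ _ th _ (mgu_supported _ _ _ Hmgu) (is_diseq_asubst th)
             (fun D D' HD _ => same_diseq_asubst th D D' HD) _
             (clause_vars (rename_clause r C)) _ _ _ HL).
    + intros x Hx Hx'. apply (fwd_lag_fresh _ _ _ _ _ HL Hfr x Hx).
      rewrite gvars_cons, in_app_iff. auto.
    + unfold clause_vars. in_app.
    + unfold clause_vars. in_app.
Qed.

Lemma fwd_resolve_moved ts G H r th :
  fwd_lag (tsvars ts) G H -> injective_ren r ->
  (forall x, In x (clause_vars (rename_clause r C1)) -> ~ In x (gvars (APred p ts :: H))) ->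
  relevant_idempotent_mgu th ts (map (tsubst (ren_subst r)) hargs) -> atom_sat M p ts ->
  exists G', step P2 (APred p ts :: G) G' /\
             fwd_lag [] G' (gsubst th (cbody (rename_clause r C1) ++ H)).
Proof.
  intros HL Hr Hfr Hmgu Hcall.
  assert (Hfr' : forall x, In x (clause_vars C1) -> ~ In (r x) (tsvars ts)).
  { intros x Hx Hx'. apply (Hfr (r x)); [apply in_clause_vars_rename; eauto|].
    rewrite gvars_cons, in_app_iff. auto. }
  assert (Hfr2 := fwd_lag_fresh _ _ _ _ _ HL Hfr).
  exists (gsubst th (cbody (rename_clause r C2) ++ G)). split.
  - apply (step_res P2 p ts G C2 r th); auto.
    + right. reflexivity.
    + intros x Hx. apply Hfr2, clause_vars_rename_C1_C2. auto.
  - rewrite body_C1_app, body_C2_app.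
    apply (lag_resolve_moved _ _ th _ (mgu_supported _ _ _ Hmgu) (is_diseq_asubst th)
             (fun D D' HD _ => same_diseq_asubst th D D' HD) _ (clause_vars (rename_clause r C1))
             _ _ _ _ _ _ _ HL).
    + intros x Hx Hx'. apply (Hfr2 x Hx). rewrite gvars_cons, in_app_iff. auto.
    + unfold clause_vars. in_app.
    + intros x Hx. rewrite !in_app_iff in Hx.
      destruct Hx as [Hx|[Hx|[Hx|[Hx|Hx]]]];
        eauto using outer_vars_clause_vars, diseq_clause_vars, outer_G1, outer_G2, outer_G3.
    + split; [reflexivity|]. simpl. red. eauto.
    + intros x Hx Hx'. apply in_app_iff in Hx' as [Hx'|Hx'];
        [apply (instantiated_diseq_disjoint r ts th Hr Hfr' Hmgu Hcall G1 outer_G1 x Hx Hx')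
        |apply (instantiated_diseq_disjoint r ts th Hr Hfr' Hmgu Hcall G2 outer_G2 x Hx Hx')].
Qed.

Lemma fwd_step h H H' G :
  step P1 (h :: H) H' -> steps P1 [APred q ts0] (h :: H) -> fwd_lag (avars h) G H ->
  exists G', step P2 (h :: G) G' /\ fwd_lag [] G' H'.
Proof.
  intros Hst Hreach HL.
  inversion Hst as [u v H0 th Hmgu|u v H0 Hn|p' ts H0 C r th HC Hr Hfr Hp Hmgu]; subst.
  - exists (gsubst th G). split; [constructor; auto|].
    apply (lag_gsubst _ _ th _ (mgu_supported _ _ _ Hmgu) (is_diseq_asubst th)
             (fun D D' HD _ => same_diseq_asubst th D D' HD) _ _ _ HL).
    + intros x Hx. left. rewrite !tsvars_single in Hx. exact Hx.
    + intros x [].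
  - exists G. split; [constructor; auto|]. eapply lag_weaken; [exact HL|intros x []].
  - destruct (classic (C = C1)) as [->|HCC1].
    + apply fwd_resolve_moved; auto. eapply Hsat; eauto.
    + apply fwd_resolve_other; auto.
Qed.

Lemma fwd_sim H : succeeds P1 H ->
  forall G, steps P1 [APred q ts0] H -> fwd_lag [] G H -> succeeds P2 G.
Proof.
  unfold succeeds. intros Hs. remember (@nil atom) as E eqn:HE.
  induction Hs as [H|H H' H'' Hst Hs IH]; intros G Hreach HL; subst.
  - rewrite (lag_nil_inv _ _ _ _ HL). constructor.
  - destruct H as [|h H]; [inversion Hst|].
    destruct (fwd_front _ _ _ _ HL (steps_trans _ _ _ _ Hst Hs))
      as [G' [HG' [[G0 [-> HL0]]|[[u [v ->]] HL0]]]];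
      apply (steps_app _ _ _ _ HG').
    + destruct (fwd_step _ _ _ _ Hst Hreach HL0) as [G'' [Hst2 HL2]].
      econstructor; [exact Hst2|]. apply IH; eauto using steps_step.
    + inversion Hst; subst. apply IH; eauto using steps_step.
      eapply lag_weaken; [exact HL0|intros x []].
Qed.

End Forward.

Section Backward.
Variables (q : nat) (ts0 : list term).
Hypothesis Hq : atom_sat M q ts0.
Variable B : nat.

(* The derivation of P2 being simulated only uses variables below [B]; the
   disequations that the simulating derivation of P1 still has to run live
   above [B], where no unifier of that derivation reaches. *)
Definition above (l : list nat) : Prop := forall x, In x l -> B <= x.

Definition failed_diseq (d : atom) : Prop :=
  (exists u v, d = ANeq u v /\ ~ unifiable [u] [v]) /\ above (avars d).
Definition instance_diseq (D D' : atom) : Prop :=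
  (exists u v s, D = ANeq u v /\ D' = ANeq (tsubst s u) (tsubst s v)) /\ above (avars D').

Local Notation bwd_lag := (lag failed_diseq instance_diseq).

Lemma failed_diseq_asubst th U : supported th U -> below B U ->
  forall d, failed_diseq d -> failed_diseq (asubst th d).
Proof.
  intros Hth HU d Hd. rewrite (asubst_supported_id _ _ Hth); auto.
  intros x Hx Hx'. apply (proj2 Hd) in Hx. apply HU in Hx'. lia.
Qed.

Lemma instance_diseq_asubst th U : supported th U -> below B U ->
  forall D D', instance_diseq D D' -> disjoint (avars D) U ->
  instance_diseq (asubst th D) (asubst th D').
Proof.
  intros Hth HU D D' HD HDU. rewrite !(asubst_supported_id _ _ Hth); auto.
  intros x Hx Hx'. apply (proj2 HD) in Hx. apply HU in Hx'. lia.
Qed.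

Lemma bwd_lag_gvars_above V G H : bwd_lag V G H ->
  forall x, In x (gvars H) -> In x (gvars G) \/ B <= x.
Proof. apply lag_gvars_above; [intros d Hd|intros D D' HD]; apply Hd || apply HD. Qed.

Lemma bwd_lag_nil_steps V H : bwd_lag V [] H -> steps P1 H [].
Proof.
  remember [] as G eqn:E.
  induction 1 as [V|V a G H _ IH|V d G H Hd _ IH|V D D' K G H HD Hdis _ IH];
    try discriminate.
  - constructor.
  - destruct Hd as [[u [v [-> Hn]]] _]. econstructor; [constructor; eauto|auto].
Qed.

Lemma bwd_front V g G H : bwd_lag V (g :: G) H ->
  exists H', steps P1 H H' /\
   ((exists H0, H' = g :: H0 /\ bwd_lag (V ++ avars g) G H0) \/
    (exists D' K G0 H0, G = K ++ G0 /\ H' = K ++ D' :: H0 /\ instance_diseq g D' /\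
       bwd_lag (V ++ gvars K ++ avars g ++ avars D') G0 H0)).
Proof.
  intros HL. remember (g :: G) as gG eqn:E. revert g G E.
  induction HL as [V|V a G' H HL IH|V d G' H Hd HL IH|V D D' K G' H HD Hdis HL IH];
    intros g G E; try discriminate.
  - injection E as -> ->. exists (g :: H). split; [constructor|]. left. eauto.
  - subst. destruct (IH g G eq_refl) as [H' [Hs Hcases]].
    destruct Hd as [[u [v [-> Hn]]] _].
    exists H'. split; [econstructor; [constructor; eauto|exact Hs]|].
    destruct Hcases as [[H0 [-> HL0]]|(D' & K & G0 & H0 & -> & -> & HD & HL0)]; [left|right].
    + exists H0. split; auto. eapply lag_weaken; [exact HL0|in_app].
    + exists D', K, G0, H0. do 3 (split; [auto|]). eapply lag_weaken; [exact HL0|in_app].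
  - injection E as -> <-. exists (K ++ D' :: H). split; [constructor|]. right. eauto 10.
Qed.

Lemma bwd_lag_fresh V a G H X : bwd_lag V G H -> below B X ->
  (forall x, In x X -> ~ In x (gvars (a :: G))) -> forall x, In x X -> ~ In x (gvars (a :: H)).
Proof.
  intros HL HX Hfr x Hx Hx'. rewrite gvars_cons, in_app_iff in Hx'.
  destruct Hx' as [Hx'|Hx']; [|destruct (bwd_lag_gvars_above _ _ _ HL x Hx') as [Hx''|Hx'']].
  - apply (Hfr x Hx). rewrite gvars_cons, in_app_iff. auto.
  - apply (Hfr x Hx). rewrite gvars_cons, in_app_iff. auto.
  - apply HX in Hx. lia.
Qed.

Lemma unified_below ts q' G C r :
  below B (gvars (APred q' ts :: G)) -> below B (clause_vars (rename_clause r C)) ->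
  below B (tsvars ts ++ tsvars (cargs (rename_clause r C))).
Proof.
  intros HG HC x Hx. apply in_app_iff in Hx as [Hx|Hx].
  - apply HG. rewrite gvars_cons, in_app_iff. auto.
  - apply HC. unfold clause_vars. rewrite in_app_iff. auto.
Qed.

Lemma bwd_resolve_other ts G H C r th :
  bwd_lag (tsvars ts) G H -> P1 C ->
  below B (gvars (APred (cpred C) ts :: G)) -> below B (clause_vars (rename_clause r C)) ->
  injective_ren r ->
  (forall x, In x (clause_vars (rename_clause r C)) -> ~ In x (gvars (APred (cpred C) ts :: G))) ->
  relevant_idempotent_mgu th ts (cargs (rename_clause r C)) ->
  exists H', step P1 (APred (cpred C) ts :: H) H' /\
             bwd_lag [] (gsubst th (cbody (rename_clause r C) ++ G)) H'.
Proof.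
  intros HL HC HbG HbC Hr Hfr Hmgu.
  assert (HbU := unified_below _ _ _ _ _ HbG HbC). assert (Hth := mgu_supported _ _ _ Hmgu).
  exists (gsubst th (cbody (rename_clause r C) ++ H)). split.
  - apply step_res; auto. exact (bwd_lag_fresh _ _ _ _ _ HL HbC Hfr).
  - apply (lag_resolve _ _ th _ Hth (failed_diseq_asubst th _ Hth HbU)
             (instance_diseq_asubst th _ Hth HbU) _ (clause_vars (rename_clause r C)) _ _ _ HL).
    + intros x Hx Hx'. apply (Hfr x Hx). rewrite gvars_cons, in_app_iff. auto.
    + unfold clause_vars. in_app.
    + unfold clause_vars. in_app.
Qed.

Lemma shift_local_fresh ts G H r N :
  bwd_lag (tsvars ts) G H -> below B (clause_vars (rename_clause r C2)) -> injective_ren r ->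
  (forall x, In x (clause_vars (rename_clause r C2)) -> ~ In x (gvars (APred p ts :: G))) ->
  B <= N -> below N (gvars (APred p ts :: H)) ->
  injective_ren (shift_local N r) /\
  forall x, In x (clause_vars (rename_clause (shift_local N r) C1)) ->
            ~ In x (gvars (APred p ts :: H)).
Proof.
  intros HL HbC Hr Hfr HBN HbH. split.
  - apply shift_local_injective; auto. intros x Hx.
    enough (r x < B) by lia. apply HbC, clause_vars_rename_C1_C2, in_clause_vars_rename.
    exists x. rewrite in_clause_vars_C1. auto.
  - intros x Hx Hx'. destruct (in_clause_vars_shift_local _ _ _ Hx) as [Hx2|Hx2].
    + exact (bwd_lag_fresh _ _ _ _ _ HL HbC Hfr x Hx2 Hx').
    + apply HbH in Hx'. lia.
Qed.

Lemma instance_diseq_shift_local r ts th N :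
  injective_ren r -> (forall x, In x (clause_vars C1) -> ~ In (r x) (tsvars ts)) ->
  relevant_idempotent_mgu th ts (map (tsubst (ren_subst r)) hargs) -> atom_sat M p ts ->
  B <= N -> (forall x, In x (unified_vars r ts) -> x < N) ->
  instance_diseq (asubst th (asubst (ren_subst r) diseq))
                 (asubst th (asubst (ren_subst (shift_local N r)) diseq)).
Proof.
  intros Hr Hfr Hmgu Hcall HBN HN.
  rewrite (instantiated_diseq_shift_local r ts th Hr Hfr Hmgu Hcall N HN).
  split; [simpl; eauto|]. intros x Hx. apply in_avars_asubst in Hx as [y [_ [<-|[]]]]. lia.
Qed.

Lemma bwd_resolve_moved ts G H r th :
  bwd_lag (tsvars ts) G H ->
  below B (gvars (APred p ts :: G)) -> below B (clause_vars (rename_clause r C2)) ->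
  injective_ren r ->
  (forall x, In x (clause_vars (rename_clause r C2)) -> ~ In x (gvars (APred p ts :: G))) ->
  relevant_idempotent_mgu th ts (map (tsubst (ren_subst r)) hargs) -> atom_sat M p ts ->
  exists H', step P1 (APred p ts :: H) H' /\
             bwd_lag [] (gsubst th (cbody (rename_clause r C2) ++ G)) H'.
Proof.
  intros HL HbG HbC Hr Hfr Hmgu Hcall.
  assert (HbU := unified_below _ _ _ _ _ HbG HbC). assert (Hth := mgu_supported _ _ _ Hmgu).
  assert (Hfr' : forall x, In x (clause_vars C1) -> ~ In (r x) (tsvars ts)).
  { intros x Hx Hx'. apply (Hfr (r x)).
    - apply clause_vars_rename_C1_C2, in_clause_vars_rename. eauto.
    - rewrite gvars_cons, in_app_iff. auto. }
  destruct (below_exists (gvars (APred p ts :: H))) as [bH HbH].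
  set (N := B + bH).
  assert (HBN : B <= N) by lia.
  assert (HbN : below N (gvars (APred p ts :: H))) by (apply (below_le bH); auto; lia).
  destruct (shift_local_fresh _ _ _ _ N HL HbC Hr Hfr HBN HbN) as [Hr1 Hfr1].
  exists (gsubst th (cbody (rename_clause (shift_local N r) C1) ++ H)). split.
  - apply step_res; auto.
    change (cargs _) with (map (tsubst (ren_subst (shift_local N r))) hargs).
    rewrite head_shift_local. exact Hmgu.
  - rewrite body_C2_app, body_C1_app.
    rewrite !gsubst_shift_local by auto using outer_G1, outer_G2, outer_G3.
    apply (lag_resolve_moved _ _ th _ Hth (failed_diseq_asubst th _ Hth HbU)
             (instance_diseq_asubst th _ Hth HbU) _
             (clause_vars (rename_clause r C2) ++ clause_vars (rename_clause (shift_local N r) C1))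
             _ _ _ _ _ _ _ HL).
    + intros x Hx Hx'. assert (HxB : x < B) by (apply HbG; rewrite gvars_cons, in_app_iff; auto).
      apply in_app_iff in Hx as [Hx|Hx].
      * apply (Hfr x Hx). rewrite gvars_cons, in_app_iff. auto.
      * destruct (in_clause_vars_shift_local _ _ _ Hx) as [Hx2|Hx2]; [|lia].
        apply (Hfr x Hx2). rewrite gvars_cons, in_app_iff. auto.
    + unfold clause_vars. in_app.
    + intros x Hx. rewrite !in_app_iff in Hx. apply in_app_iff.
      destruct Hx as [Hx|[Hx|[Hx|[Hx|Hx]]]]; [left; apply clause_vars_rename_C1_C2 ..|right];
        eauto using outer_vars_clause_vars, diseq_clause_vars, outer_G1, outer_G2, outer_G3.
    + apply (instance_diseq_shift_local r ts th N); auto. intros x Hx. apply HbU in Hx. lia.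
    + intros x Hx Hx'. apply in_app_iff in Hx' as [Hx'|Hx'];
        [apply (instantiated_diseq_disjoint r ts th Hr Hfr' Hmgu Hcall G1 outer_G1 x Hx Hx')
        |apply (instantiated_diseq_disjoint r ts th Hr Hfr' Hmgu Hcall G2 outer_G2 x Hx Hx')].
Qed.

Lemma bwd_step_front g G G' H :
  bstep P2 B (g :: G) G' -> steps P1 [APred q ts0] (g :: H) -> bwd_lag (avars g) G H ->
  exists H', steps P1 (g :: H) H' /\ bwd_lag [] G' H'.
Proof.
  intros Hst Hreach HL.
  inversion Hst as [u v G0 th HbG Hmgu|u v G0 HbG Hn|p' ts G0 C r th HbG HbC HC Hr Hfr Hp Hmgu];
    subst.
  - exists (gsubst th H). split; [apply step_steps; constructor; auto|].
    assert (Hth := mgu_supported _ _ _ Hmgu). rewrite !tsvars_single in Hth.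
    assert (HbU : below B (tvars u ++ tvars v)).
    { intros x Hx. apply HbG. rewrite gvars_cons, in_app_iff. auto. }
    apply (lag_gsubst _ _ th _ Hth (failed_diseq_asubst th _ Hth HbU)
             (instance_diseq_asubst th _ Hth HbU) _ _ _ HL).
    + intros x Hx. left. exact Hx.
    + intros x [].
  - exists H. split; [apply step_steps; constructor; auto|].
    eapply lag_weaken; [exact HL|intros x []].
  - destruct HC as [[HC HCC1]| ->].
    + destruct (bwd_resolve_other ts G H C r th) as [H' [Hst' HL']]; eauto using step_steps.
    + destruct (bwd_resolve_moved ts G H r th) as [H' [Hst' HL']]; eauto using step_steps.
Qed.

Lemma bwd_step G G' H : bstep P2 B G G' -> steps P1 [APred q ts0] H -> bwd_lag [] G H ->
  exists H', steps P1 H H' /\ bwd_lag [] G' H'.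
Proof.
  intros Hst Hreach HL. destruct G as [|g G]; [inversion Hst|].
  destruct (bwd_front _ _ _ _ HL)
    as [H' [Hs [[H0 [-> HL0]]|(D' & K & G0 & H0 & -> & -> & HD & HL0)]]].
  - destruct (bwd_step_front g G G' H0 Hst) as [H'' [Hs' HL']]; eauto using steps_app.
  - destruct HD as [(u & v & s & -> & ->) Habove]. inversion Hst as [| ? ? ? ? Hn |]; subst.
    exists (K ++ ANeq (tsubst s u) (tsubst s v) :: H0). split; [exact Hs|].
    apply lag_app, lag_pending.
    + split; [eauto using not_unifiable_tsubst|exact Habove].
    + eapply lag_weaken; [exact HL0|in_app].
Qed.

Lemma bwd_sim G G' : bsteps P2 B G G' ->
  forall H, steps P1 [APred q ts0] H -> bwd_lag [] G H ->
  exists H', steps P1 H H' /\ bwd_lag [] G' H'.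
Proof.
  induction 1 as [G|G G' G'' Hst _ IH]; intros H Hreach HL.
  - exists H. split; [constructor|auto].
  - destruct (bwd_step _ _ _ Hst Hreach HL) as [H' [Hs HL']].
    destruct (IH H' (steps_app _ _ _ _ Hreach Hs) HL') as [H'' [Hs' HL'']].
    exists H''. split; eauto using steps_app.
Qed.

End Backward.

Lemma transformed_satisfies : prog_satisfies P2 M.
Proof.
  intros q ts Hq q' ts' G Hs. destruct (steps_bsteps _ _ _ Hs) as [B HB].
  destruct (bwd_sim q ts Hq B _ _ HB [APred q ts]) as [H [HsH HL]];
    [constructor|apply lag_cons, lag_nil|].
  destruct (bwd_front B _ _ _ _ HL)
    as [H' [HsH' [[H0 [-> _]]|(D' & K & G0 & H0 & _ & _ & [(u & v & s & E & _) _] & _)]]];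
    [|discriminate].
  eapply Hsat; eauto using steps_app.
Qed.

Lemma transformed_succeeds q ts : atom_sat M q ts ->
  succeeds P1 [APred q ts] <-> succeeds P2 [APred q ts].
Proof.
  intros Hq. split; intros Hs.
  - apply (fwd_sim q ts Hq _ Hs); [constructor|apply lag_cons, lag_nil].
  - destruct (steps_bsteps _ _ _ Hs) as [B HB].
    destruct (bwd_sim q ts Hq B _ _ HB [APred q ts]) as [H [HsH HL]];
      [constructor|apply lag_cons, lag_nil|].
    exact (steps_app _ _ _ _ HsH (bwd_lag_nil_steps _ _ _ HL)).
Qed.

End Transformation.

Lemma clause_safe_perm M C C' :
  cpred C = cpred C' -> cargs C = cargs C' -> Permutation (cbody C) (cbody C') ->
  clause_safe M C -> clause_safe M C'.
Proof.
  intros Ep Ea Hp Hs K u v L EK x Hx.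
  assert (Hin : In (ANeq u v) (cbody C)).
  { apply (Permutation_in _ (Permutation_sym Hp)). rewrite EK. apply in_elt. }
  apply in_split in Hin as (K' & L' & EK').
  assert (HKL : Permutation (K' ++ L') (K ++ L)).
  { apply Permutation_app_inv with (a := ANeq u v). rewrite <- EK, <- EK'. exact Hp. }
  rewrite <- Ep, <- Ea.
  destruct (Hs K' u v L' EK' x Hx) as [Hi|Hn]; [left; exact Hi|right].
  intros Hc. apply Hn. rewrite !in_app_iff in *. destruct Hc as [Hc|Hc]; auto. right.
  rewrite <- !in_app_iff, <- gvars_app, in_gvars in *. destruct Hc as [a [Ha Hxa]].
  exists a. split; auto. eapply Permutation_in; [apply Permutation_sym, HKL|exact Ha].
Qed.

Lemma transformed_safe M P1 p hargs G1 G2 G3 t1 t2 :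
  prog_safe M P1 -> P1 (C1 p hargs G1 G2 G3 t1 t2) ->
  prog_safe M (P2 P1 p hargs G1 G2 G3 t1 t2).
Proof.
  intros Hsafe HC1 C [[HC _]| ->]; auto.
  apply (clause_safe_perm M (C1 p hargs G1 G2 G3 t1 t2)); auto. simpl.
  apply Permutation_app_head, Permutation_sym, Permutation_middle.
Qed.

Theorem proposition1 :
  forall (M : mode) (P1 : program) (p : nat) (hargs : list term)
         (G1 G2 G3 : goal) (t1 t2 : term),
    is_mode_for M P1 ->
    prog_safe M P1 ->
    prog_satisfies P1 M ->
    P1 (mkClause p hargs (G1 ++ G2 ++ ANeq t1 t2 :: G3)) ->
    let P2 := replace_clause P1 (mkClause p hargs (G1 ++ G2 ++ ANeq t1 t2 :: G3))
                                (mkClause p hargs (G1 ++ ANeq t1 t2 :: G2 ++ G3)) in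
    prog_safe M P2 /\
    prog_satisfies P2 M /\
    (forall q ts, atom_sat M q ts ->
       (succeeds P1 [APred q ts] <-> succeeds P2 [APred q ts])).
Proof.
  intros M P1 p hargs G1 G2 G3 t1 t2 _ Hsafe Hsat HC1 P2'.
  split; [|split].
  - exact (transformed_safe M P1 p hargs G1 G2 G3 t1 t2 Hsafe HC1).
  - exact (transformed_satisfies M P1 p hargs G1 G2 G3 t1 t2 Hsafe HC1 Hsat).
  - exact (transformed_succeeds M P1 p hargs G1 G2 G3 t1 t2 Hsafe HC1 Hsat).
Qed.
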